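(* Let $(X,d)$ be a proper metric space, let $\sigma$ be a conical bicombing on $X$, and let $x,y\in X$. Then for each integer $n\ge1$ there exist unique points $\sigma_{xy}(n;i)$, $i=0,\dots,n$, such that $\sigma_{xy}(n;0)=x$, $\sigma_{xy}(n;n)=y$, and \[ \sigma_{xy}(n;i)=\sigma\big(\sigma_{xy}(n;i-1),\sigma_{xy}(n;i+1),\tfrac12\big) \] for all $1\le i\le n-1$. Moreover, the map $\sigma^{(n)}\colon X\times X\times[0,1]\to X$ given by \[ \sigma^{(n)}\big(x,y,(1-\lambda)\tfrac{i}{n}+\lambda\tfrac{i+1}{n}\big):=\sigma\big(\sigma_{xy}(n;i),\sigma_{xy}(n;i+1),\lambda\big) \] for all $x,y\in X$, $\lambda\in[0,1]$ and $0\le i\le n-1$, is a conical bicombing.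
   Context: A bicombing on $(X,d)$ is a map $\sigma\colon X\times X\times[0,1]\to X$ such that each $\sigma_{xy}:=\sigma(x,y,\cdot)$ is a geodesic from $x$ to $y$ ($\sigma_{xy}(0)=x$, $\sigma_{xy}(1)=y$, $d(\sigma_{xy}(s),\sigma_{xy}(t))=|s-t|d(x,y)$); it is conical if $d(\sigma_{xy}(t),\sigma_{x'y'}(t))\le(1-t)d(x,x')+t\,d(y,y')$ for all $x,y,x',y'\in X$, $t\in[0,1]$. A metric space is proper if closed bounded sets are compact. *)

From Stdlib Require Import Reals Lra List.
Open Scope R_scope.

Definition is_metric {X : Type} (d : X -> X -> R) : Prop :=
  (forall x y, 0 <= d x y) /\
  (forall x y, d x y = 0 <-> x = y) /\
  (forall x y, d x y = d y x) /\
  (forall x y z, d x z <= d x y + d y z).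

Definition open_set {X : Type} (d : X -> X -> R) (U : X -> Prop) : Prop :=
  forall x, U x -> exists r, 0 < r /\ forall y, d x y < r -> U y.

Definition closed_set {X : Type} (d : X -> X -> R) (F : X -> Prop) : Prop :=
  open_set d (fun x => ~ F x).

Definition bounded_set {X : Type} (d : X -> X -> R) (A : X -> Prop) : Prop :=
  exists r, forall x y, A x -> A y -> d x y <= r.

Definition compact_set {X : Type} (d : X -> X -> R) (K : X -> Prop) : Prop :=
  forall (I : Type) (U : I -> X -> Prop),
    (forall i, open_set d (U i)) ->
    (forall x, K x -> exists i, U i x) ->
    exists l : list I, forall x, K x -> exists i, In i l /\ U i x.

Definition proper_space {X : Type} (d : X -> X -> R) : Prop :=
  forall F, closed_set d F -> bounded_set d F -> compact_set d F.

Definition is_geodesic {X : Type} (d : X -> X -> R) (x y : X) (g : R -> X) : Prop :=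
  g 0 = x /\ g 1 = y /\
  forall s t, 0 <= s <= 1 -> 0 <= t <= 1 -> d (g s) (g t) = Rabs (s - t) * d x y.

Definition bicombing {X : Type} (d : X -> X -> R) (sigma : X -> X -> R -> X) : Prop :=
  forall x y, is_geodesic d x y (sigma x y).

Definition conical_bicombing {X : Type} (d : X -> X -> R) (sigma : X -> X -> R -> X) : Prop :=
  bicombing d sigma /\
  forall x y x' y' t, 0 <= t <= 1 ->
    d (sigma x y t) (sigma x' y' t) <= (1 - t) * d x x' + t * d y y'.

Definition subdivision_points {X : Type} (sigma : X -> X -> R -> X) (n : nat)
    (x y : X) (p : nat -> X) : Prop :=
  p O = x /\ p n = y /\
  forall i : nat, (1 <= i)%nat -> (i <= n - 1)%nat ->
    p i = sigma (p (i - 1)%nat) (p (i + 1)%nat) (1 / 2).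

Definition is_sigma_n {X : Type} (sigma : X -> X -> R -> X) (n : nat)
    (P : X -> X -> nat -> X) (s : X -> X -> R -> X) : Prop :=
  forall x y (lam : R) (i : nat), 0 <= lam <= 1 -> (i < n)%nat ->
    s x y ((1 - lam) * (INR i / INR n) + lam * (INR (i + 1) / INR n))
      = sigma (P x y i) (P x y (i + 1)%nat) lam.

From Pilot Require Import Defs.
From Stdlib Require Import Reals Lra Lia List Classical IndefiniteDescription.
Open Scope R_scope.

(* For two families of subdivision points, conicality makes [i |-> d (p i) (q i)]
   discretely subharmonic, so by the discrete maximum principle it lies below
   the linear interpolation of its end values; this gives uniqueness and, on
   each piece, the conical inequality for sigma^(n).  Existence: the averaging
   map [p i |-> sigma (p (i-1)) (p (i+1)) (1/2)] with fixed ends contracts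
   geometrically in the sup-norm weighted by [i (n - i)], so its iterates
   converge in the space, which is complete because it is proper.  Finally,
   consecutive subdivision points are [d x y / n] apart, which makes the
   piecewise map sigma^(n) a geodesic. *)

Lemma finite_upper_bound (f : nat -> R) (n : nat) :
  exists M, 0 <= M /\ forall i, (i <= n)%nat -> f i <= M.
Proof.
  induction n as [|n [M [HM Hf]]].
  - exists (Rabs (f O)). split; [apply Rabs_pos|].
    intros i Hi. replace i with O by lia. apply Rle_abs.
  - exists (Rmax M (Rabs (f (S n)))). split.
    + eapply Rle_trans; [exact HM | apply Rmax_l].
    + intros i Hi. destruct (Nat.eq_dec i (S n)) as [->|Hne].
      * eapply Rle_trans; [apply Rle_abs | apply Rmax_r].
      * eapply Rle_trans; [apply Hf; lia | apply Rmax_l].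
Qed.

Lemma eventually_forall_list {I : Type} (P : I -> nat -> Prop) :
  (forall i, exists N, forall k, (N <= k)%nat -> P i k) ->
  forall l : list I, exists N, forall i, In i l -> forall k, (N <= k)%nat -> P i k.
Proof.
  intros HP l. induction l as [|a l [N IH]].
  - exists O. intros i [].
  - destruct (HP a) as [Na Ha]. exists (Nat.max N Na). intros i [<-|Hi] k Hk.
    + apply Ha. lia.
    + apply IH; [exact Hi | lia].
Qed.

Lemma INR_ge_1 (n : nat) : (1 <= n)%nat -> 1 <= INR n.
Proof. apply (le_INR 1). Qed.

Lemma le_geometric_nonpos (v C th : R) :
  0 <= th < 1 -> (forall k, v <= C * th ^ k) -> v <= 0.
Proof.
  intros Hth Hv. apply Rnot_lt_le. intros Hpos.
  assert (HC : v <= C) by (specialize (Hv O); simpl in Hv; lra).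
  destruct (pow_lt_1_zero th ltac:(rewrite Rabs_pos_eq; lra) (v / C)) as [N HN].
  { apply Rdiv_lt_0_compat; lra. }
  specialize (HN N (le_n N)). rewrite Rabs_pos_eq in HN by (apply pow_le; lra).
  assert (C * th ^ N < C * (v / C)) by (apply Rmult_lt_compat_l; lra).
  replace (C * (v / C)) with v in * by (field; lra).
  specialize (Hv N). lra.
Qed.

(** * Discrete maximum principle *)

Definition weight (n i : nat) : R := INR i * (INR n - INR i).

Definition rate (n : nat) : R := 1 - 1 / (INR n * INR n).

Lemma weight_0 n : weight n O = 0.
Proof. unfold weight. simpl. ring. Qed.

Lemma weight_n n : weight n n = 0.
Proof. unfold weight. ring. Qed.

Lemma weight_le_sqr n i : (i <= n)%nat -> weight n i <= INR n * INR n.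
Proof. intros Hi. apply le_INR in Hi. pose proof (pos_INR i). unfold weight. nra. Qed.

Lemma weight_midpoint n i :
  (1 <= i)%nat -> weight n (i - 1) + weight n (i + 1) = 2 * weight n i - 2.
Proof. intros Hi. unfold weight. rewrite minus_INR, plus_INR by lia. simpl. ring. Qed.

Section MaximumPrinciple.

Variable n : nat.
Hypothesis Hn : (1 <= n)%nat.

Lemma weight_ge_1 i : (1 <= i)%nat -> (i <= n - 1)%nat -> 1 <= weight n i.
Proof.
  intros H1 H2. unfold weight.
  assert (1 <= INR i) by (apply (le_INR 1); lia).
  assert (INR i + 1 <= INR n) by (rewrite <- S_INR; apply le_INR; lia).
  nra.
Qed.

Lemma rate_range : 0 <= rate n < 1.
Proof.
  pose proof (INR_ge_1 n Hn). unfold rate.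
  assert (0 < 1 / (INR n * INR n) <= 1); [|lra].
  split; [apply Rdiv_lt_0_compat; nra|].
  unfold Rdiv. rewrite Rmult_1_l, <- Rinv_1. apply Rinv_le_contravar; nra.
Qed.

Lemma weight_sub_1_le i : (i <= n)%nat -> weight n i - 1 <= rate n * weight n i.
Proof.
  intros Hi. pose proof (INR_ge_1 n Hn). pose proof (weight_le_sqr n i Hi).
  set (W := INR n * INR n) in *. assert (1 <= W) by (unfold W; nra).
  assert (weight n i / W <= 1).
  { apply (Rmult_le_reg_r W); [lra|].
    unfold Rdiv. rewrite Rmult_assoc, Rinv_l by lra. lra. }
  replace (rate n * weight n i) with (weight n i - weight n i / W)
    by (unfold rate; fold W; field; lra).
  lra.
Qed.

(* Averaging contracts by [rate n] in the sup-norm weighted by [i (n - i)],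
   because the neighbours of [weight n i] average to
   [weight n i - 1 <= rate n * weight n i]. *)
Lemma averaging_decay (e : nat -> nat -> R) (C : R) : 0 <= C ->
  (forall k, e k O <= 0) -> (forall k, e k n <= 0) ->
  (forall k i, (1 <= i)%nat -> (i <= n - 1)%nat ->
     2 * e (S k) i <= e k (i - 1)%nat + e k (i + 1)%nat) ->
  (forall i, (1 <= i)%nat -> (i <= n - 1)%nat -> e O i <= C * weight n i) ->
  forall k i, (i <= n)%nat -> e k i <= C * rate n ^ k * weight n i.
Proof.
  intros HC H0 Hend Havg Hinit k. induction k as [|k IH]; intros i Hi.
  all: destruct (Nat.eq_dec i 0) as [->|Hi0];
    [rewrite weight_0, Rmult_0_r; apply H0|].
  all: destruct (Nat.eq_dec i n) as [->|Hin];
    [rewrite weight_n, Rmult_0_r; apply Hend|].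
  - rewrite pow_O, Rmult_1_r. apply Hinit; lia.
  - pose proof (Havg k i ltac:(lia) ltac:(lia)).
    pose proof (IH (i - 1)%nat ltac:(lia)). pose proof (IH (i + 1)%nat ltac:(lia)).
    pose proof (weight_midpoint n i ltac:(lia)).
    pose proof (weight_sub_1_le i Hi).
    assert (Hck : 0 <= C * rate n ^ k)
      by (pose proof rate_range; apply Rmult_le_pos; [lra | apply pow_le; lra]).
    assert (C * rate n ^ k * (weight n i - 1) <= C * rate n ^ k * (rate n * weight n i))
      by (apply Rmult_le_compat_l; assumption).
    simpl. nra.
Qed.

Lemma discrete_max_principle (f : nat -> R) :
  f O <= 0 -> f n <= 0 ->
  (forall i, (1 <= i)%nat -> (i <= n - 1)%nat -> 2 * f i <= f (i - 1)%nat + f (i + 1)%nat) ->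
  forall i, (i <= n)%nat -> f i <= 0.
Proof.
  intros H0 Hend Hsub i Hi.
  destruct (finite_upper_bound f n) as [M [HM Hf]].
  assert (Hdecay := averaging_decay (fun _ => f) M HM (fun _ => H0) (fun _ => Hend)
                      (fun _ => Hsub)).
  apply (le_geometric_nonpos (f i) (M * (INR n * INR n)) (rate n) rate_range).
  intros k. eapply Rle_trans.
  - apply Hdecay; [|exact Hi]. intros j H1 H2.
    pose proof (weight_ge_1 j H1 H2). specialize (Hf j ltac:(lia)). nra.
  - pose proof (weight_le_sqr n i Hi). pose proof rate_range.
    assert (0 <= rate n ^ k) by (apply pow_le; lra).
    replace (M * (INR n * INR n) * rate n ^ k) with (M * rate n ^ k * (INR n * INR n))
      by ring.
    apply Rmult_le_compat_l; [apply Rmult_le_pos|]; assumption.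
Qed.

End MaximumPrinciple.

(** * Cauchy sequences in proper spaces *)

Definition cauchy {X : Type} (d : X -> X -> R) (u : nat -> X) : Prop :=
  forall e, 0 < e -> exists N, forall k l, (N <= k)%nat -> (N <= l)%nat -> d (u k) (u l) < e.

Definition converges {X : Type} (d : X -> X -> R) (u : nat -> X) (z : X) : Prop :=
  forall e, 0 < e -> exists N, forall k, (N <= k)%nat -> d (u k) z < e.

Section Metric.

Variables (X : Type) (d : X -> X -> R).
Hypothesis Hm : is_metric d.

Lemma dist_nonneg a b : 0 <= d a b.
Proof. apply Hm. Qed.

Lemma dist_refl a : d a a = 0.
Proof. apply Hm. reflexivity. Qed.

Lemma dist_eq a b : d a b = 0 -> a = b.
Proof. apply Hm. Qed.

Lemma dist_sym a b : d a b = d b a.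
Proof. apply Hm. Qed.

Lemma dist_triangle a b c : d a c <= d a b + d b c.
Proof. apply Hm. Qed.

Lemma dist_lt_all_eq a b : (forall e, 0 < e -> d a b < e) -> a = b.
Proof.
  intros Hsmall. apply dist_eq. pose proof (dist_nonneg a b).
  destruct (Req_dec (d a b) 0) as [E|E]; [exact E|].
  specialize (Hsmall (d a b) ltac:(lra)). lra.
Qed.

Lemma dist_chain_le (m : nat) (p : nat -> X) (delta : R) :
  (forall i, (i < m)%nat -> d (p i) (p (i + 1)%nat) <= delta) ->
  forall i k, (i + k <= m)%nat -> d (p i) (p (i + k)%nat) <= INR k * delta.
Proof.
  intros Hstep i k. induction k as [|k IH]; intros Hik.
  - rewrite Nat.add_0_r, dist_refl. simpl. lra.
  - eapply Rle_trans; [apply (dist_triangle _ (p (i + k)%nat))|].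
    replace (i + S k)%nat with (i + k + 1)%nat by lia.
    specialize (IH ltac:(lia)). specialize (Hstep (i + k)%nat ltac:(lia)).
    rewrite S_INR. lra.
Qed.

Lemma converges_unique u z z' : converges d u z -> converges d u z' -> z = z'.
Proof.
  intros Hz Hz'. apply dist_lt_all_eq. intros e He.
  destruct (Hz (e / 2) ltac:(lra)) as [N HN]. destruct (Hz' (e / 2) ltac:(lra)) as [N' HN'].
  specialize (HN (Nat.max N N') ltac:(lia)). specialize (HN' (Nat.max N N') ltac:(lia)).
  pose proof (dist_triangle z (u (Nat.max N N')) z') as T.
  rewrite (dist_sym z (u _)) in T. lra.
Qed.

Lemma converges_const_eq u z a : converges d u z -> (forall k, u k = a) -> z = a.
Proof.
  intros Hz Hu. apply dist_lt_all_eq. intros e He.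
  destruct (Hz e He) as [N HN]. specialize (HN N (le_n N)).
  rewrite Hu in HN. rewrite dist_sym. exact HN.
Qed.

Lemma converges_shift u z : converges d u z -> converges d (fun k => u (S k)) z.
Proof. intros Hz e He. destruct (Hz e He) as [N HN]. exists N. intros k Hk. apply HN. lia. Qed.

Lemma geometric_sum_le (u : nat -> X) (A th : R) : th < 1 ->
  (forall k, d (u k) (u (S k)) <= A * th ^ k) ->
  forall k j, d (u k) (u (k + j)%nat) * (1 - th) <= A * th ^ k * (1 - th ^ j).
Proof.
  intros Hth Hstep k j. induction j as [|j IH].
  - rewrite Nat.add_0_r, dist_refl. simpl. lra.
  - pose proof (dist_triangle (u k) (u (k + j)%nat) (u (k + S j)%nat)) as T.
    replace (k + S j)%nat with (S (k + j)) in * by lia.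
    pose proof (Hstep (k + j)%nat) as Hkj. rewrite pow_add in Hkj.
    replace (A * th ^ k * (1 - th ^ S j))
      with (A * th ^ k * (1 - th ^ j) + A * (th ^ k * th ^ j) * (1 - th)) by (simpl; ring).
    apply Rmult_le_compat_r with (r := 1 - th) in Hkj; [|lra].
    apply Rmult_le_compat_r with (r := 1 - th) in T; [|lra].
    lra.
Qed.

Lemma geometric_cauchy (u : nat -> X) (A th : R) : 0 <= A -> 0 <= th < 1 ->
  (forall k, d (u k) (u (S k)) <= A * th ^ k) -> cauchy d u.
Proof.
  intros HA Hth Hstep e He.
  destruct (pow_lt_1_zero th ltac:(rewrite Rabs_pos_eq; lra) (e * (1 - th) / (A + 1)))
    as [N HN].
  { apply Rdiv_lt_0_compat; [apply Rmult_lt_0_compat|]; lra. }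
  assert (Hfar : forall k j, (N <= k)%nat -> d (u k) (u (k + j)%nat) < e).
  { intros k j Hk. specialize (HN k Hk). rewrite Rabs_pos_eq in HN by (apply pow_le; lra).
    pose proof (geometric_sum_le u A th ltac:(lra) Hstep k j) as Hsum.
    assert (0 <= th ^ j) by (apply pow_le; lra).
    assert (A * th ^ k <= A * (e * (1 - th) / (A + 1))) by (apply Rmult_le_compat_l; lra).
    assert (A * (e * (1 - th) / (A + 1)) < e * (1 - th)).
    { apply (Rmult_lt_reg_r (A + 1)); [lra|].
      replace (A * (e * (1 - th) / (A + 1)) * (A + 1)) with (A * (e * (1 - th))) by (field; lra).
      assert (0 < e * (1 - th)) by (apply Rmult_lt_0_compat; lra). nra. }
    assert (0 <= A * th ^ k) by (apply Rmult_le_pos; [|apply pow_le]; lra).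
    apply (Rmult_lt_reg_r (1 - th)); [lra|]. nra. }
  exists N. intros k l Hk Hl. destruct (Nat.le_ge_cases k l) as [Hkl|Hkl].
  - replace l with (k + (l - k))%nat by lia. apply Hfar. exact Hk.
  - rewrite dist_sym. replace k with (l + (k - l))%nat by lia. apply Hfar. exact Hl.
Qed.

(* [Reals] exports [open_set] and [closed_set] on [R] that shadow those of [Defs]. *)
Lemma open_ball_open c r : Defs.open_set d (fun w => d c w < r).
Proof.
  intros w Hw. exists (r - d c w). split; [lra|].
  intros w' Hw'. pose proof (dist_triangle c w w'). lra.
Qed.

Lemma closed_ball_closed c r : Defs.closed_set d (fun w => d c w <= r).
Proof.
  intros w Hw. apply Rnot_le_lt in Hw. exists (d c w - r). split; [lra|].
  intros w' Hw'. pose proof (dist_triangle c w' w). rewrite (dist_sym w') in *. lra.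
Qed.

Lemma closed_ball_bounded c r : Defs.bounded_set d (fun w => d c w <= r).
Proof.
  exists (2 * r). intros a b Ha Hb.
  pose proof (dist_triangle a c b). rewrite (dist_sym a c) in *. lra.
Qed.

Lemma cauchy_bounded u : cauchy d u -> exists c r, forall k, d c (u k) <= r.
Proof.
  intros Hc. destruct (Hc 1 ltac:(lra)) as [N HN].
  destruct (finite_upper_bound (fun k => d (u N) (u k)) N) as [M [HM0 HM]].
  exists (u N), (M + 1). intros k. destruct (Nat.le_gt_cases k N) as [Hk|Hk].
  - specialize (HM k Hk). simpl in HM. lra.
  - specialize (HN N k (le_n N) ltac:(lia)). lra.
Qed.

Lemma cauchy_not_converges_far u z : cauchy d u -> ~ converges d u z ->
  exists e, 0 < e /\ exists N, forall k, (N <= k)%nat -> e <= d z (u k).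
Proof.
  intros Hc Hz.
  assert (Hfreq : exists e, 0 < e /\ forall N, exists k, (N <= k)%nat /\ e <= d (u k) z).
  { apply NNPP. intros Hnot. apply Hz. intros e He. apply NNPP. intros HnoN.
    apply Hnot. exists e. split; [exact He|]. intros N.
    apply NNPP. intros Hk. apply HnoN. exists N. intros k Hk'.
    apply Rnot_le_lt. intros Hle. apply Hk. exists k. split; assumption. }
  destruct Hfreq as [e [He Hfreq]].
  destruct (Hc (e / 2) ltac:(lra)) as [N HN]. destruct (Hfreq N) as [k [Hk Hek]].
  exists (e / 2). split; [lra|]. exists N. intros l Hl.
  pose proof (dist_triangle (u k) (u l) z). specialize (HN k l Hk Hl).
  rewrite (dist_sym (u l)) in *. lra.
Qed.

Hypothesis Hprop : proper_space d.

(* If [u] had no limit, every point would have a ball that [u] eventually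
   leaves; finitely many of them cover the closed ball containing [u]. *)
Lemma proper_complete u : cauchy d u -> exists z, converges d u z.
Proof.
  intros Hc. destruct (cauchy_bounded u Hc) as [c [r Hr]].
  apply NNPP. intros Hno.
  set (I := {zr : X * R | 0 < snd zr /\
              exists N, forall k, (N <= k)%nat -> snd zr <= d (fst zr) (u k)}).
  destruct (Hprop _ (closed_ball_closed c r) (closed_ball_bounded c r) I
              (fun i w => d (fst (proj1_sig i)) w < snd (proj1_sig i))) as [l Hl].
  - intros i. apply open_ball_open.
  - intros w _.
    destruct (cauchy_not_converges_far u w Hc (fun H => Hno (ex_intro _ w H))) as [e [He HN]].
    exists (exist _ (w, e) (conj He HN)). simpl. rewrite dist_refl. exact He.
  - destruct (eventually_forall_list
                (fun (i : I) k => snd (proj1_sig i) <= d (fst (proj1_sig i)) (u k))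
                (fun i => proj2 (proj2_sig i)) l) as [N HN].
    destruct (Hl (u N) (Hr N)) as [i [Hil Hi]].
    specialize (HN i Hil N (le_n N)). lra.
Qed.

End Metric.

(** * Subdivision points of a conical bicombing *)

Section Bicombing.

Variables (X : Type) (d : X -> X -> R) (sigma : X -> X -> R -> X).
Hypothesis Hm : is_metric d.
Hypothesis Hs : conical_bicombing d sigma.

Lemma bicombing_0 a b : sigma a b 0 = a.
Proof. apply (proj1 Hs a b). Qed.

Lemma bicombing_1 a b : sigma a b 1 = b.
Proof. apply (proj1 Hs a b). Qed.

Lemma bicombing_dist a b s t : 0 <= s <= 1 -> 0 <= t <= 1 ->
  d (sigma a b s) (sigma a b t) = Rabs (s - t) * d a b.
Proof. apply (proj1 Hs a b). Qed.

Lemma bicombing_conical a b a' b' t : 0 <= t <= 1 ->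
  d (sigma a b t) (sigma a' b' t) <= (1 - t) * d a a' + t * d b b'.
Proof. apply (proj2 Hs). Qed.

Lemma bicombing_dist_l a b t : 0 <= t <= 1 -> d a (sigma a b t) = t * d a b.
Proof.
  intros Ht. rewrite <- (bicombing_0 a b) at 1.
  rewrite bicombing_dist, Rabs_left1 by lra. ring.
Qed.

Lemma bicombing_dist_r a b t : 0 <= t <= 1 -> d (sigma a b t) b = (1 - t) * d a b.
Proof.
  intros Ht. rewrite <- (bicombing_1 a b) at 2.
  rewrite bicombing_dist, Rabs_left1 by lra. ring.
Qed.

Lemma bicombing_diag a t : 0 <= t <= 1 -> sigma a a t = a.
Proof.
  intros Ht. apply (dist_eq _ _ Hm). rewrite bicombing_dist_r, dist_refl by assumption. ring.
Qed.

Lemma bicombing_converges (a b : nat -> X) za zb t : 0 <= t <= 1 ->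
  converges d a za -> converges d b zb ->
  converges d (fun k => sigma (a k) (b k) t) (sigma za zb t).
Proof.
  intros Ht Ha Hb e He.
  destruct (Ha e He) as [Na HNa]. destruct (Hb e He) as [Nb HNb].
  exists (Nat.max Na Nb). intros k Hk.
  specialize (HNa k ltac:(lia)). specialize (HNb k ltac:(lia)).
  eapply Rle_lt_trans; [apply bicombing_conical; exact Ht|].
  destruct (Rle_lt_dec t (1 / 2)); nra.
Qed.

Variable n : nat.
Hypothesis Hn : (1 <= n)%nat.

Lemma subdivision_diag x : subdivision_points sigma n x x (fun _ => x).
Proof.
  split; [reflexivity | split; [reflexivity|]].
  intros i _ _. symmetry. apply bicombing_diag. lra.
Qed.

Lemma subdivision_dist_le x y x' y' p q :
  subdivision_points sigma n x y p -> subdivision_points sigma n x' y' q ->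
  forall i, (i <= n)%nat ->
  d (p i) (q i) <= (1 - INR i / INR n) * d x x' + INR i / INR n * d y y'.
Proof.
  intros [Hp0 [Hpn Hpmid]] [Hq0 [Hqn Hqmid]] i Hi.
  pose proof (INR_ge_1 n Hn).
  set (L := fun j => (1 - INR j / INR n) * d x x' + INR j / INR n * d y y').
  enough (d (p i) (q i) - L i <= 0) by (unfold L in *; lra).
  apply (discrete_max_principle n Hn (fun j => d (p j) (q j) - L j)); [| | |exact Hi].
  - unfold L. rewrite Hp0, Hq0. simpl. unfold Rdiv. lra.
  - unfold L. rewrite Hpn, Hqn. field_simplify; lra.
  - intros j H1 H2.
    assert (L (j - 1)%nat + L (j + 1)%nat = 2 * L j).
    { unfold L. rewrite minus_INR, plus_INR by lia. simpl. field. lra. }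
    pose proof (bicombing_conical (p (j - 1)%nat) (p (j + 1)%nat) (q (j - 1)%nat)
                  (q (j + 1)%nat) (1 / 2) ltac:(lra)).
    rewrite <- (Hpmid j H1 H2), <- (Hqmid j H1 H2) in *. lra.
Qed.

Lemma subdivision_unique x y p q :
  subdivision_points sigma n x y p -> subdivision_points sigma n x y q ->
  forall i, (i <= n)%nat -> q i = p i.
Proof.
  intros Hp Hq i Hi. apply (dist_eq _ _ Hm).
  pose proof (subdivision_dist_le x y x y q p Hq Hp i Hi) as Hle.
  rewrite !(dist_refl _ _ Hm) in Hle. pose proof (dist_nonneg _ _ Hm (q i) (p i)). lra.
Qed.

(* Each interior point is the midpoint of its neighbours, so consecutive gaps
   are all equal; comparison with the constant subdivision of [x, x] bounds
   the first gap by [d x y / n], and the triangle inequality along the chain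
   gives the reverse bound. *)
Lemma subdivision_step x y p : subdivision_points sigma n x y p ->
  forall i, (i < n)%nat -> d (p i) (p (i + 1)%nat) = d x y / INR n.
Proof.
  intros Hp. pose proof Hp as [Hp0 [Hpn Hpmid]]. pose proof (INR_ge_1 n Hn).
  assert (Hconst : forall i, (i < n)%nat -> d (p i) (p (i + 1)%nat) = d (p O) (p 1%nat)).
  { induction i as [|i IH]; intros Hi; [reflexivity|].
    rewrite <- IH by lia.
    pose proof (Hpmid (S i) ltac:(lia) ltac:(lia)) as Hmid.
    replace (S i - 1)%nat with i in Hmid by lia.
    replace (S i) with (i + 1)%nat in * by lia. rewrite Hmid.
    rewrite bicombing_dist_l, bicombing_dist_r by lra. lra. }
  assert (Hup : d (p O) (p 1%nat) <= d x y / INR n).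
  { pose proof (subdivision_dist_le x y x x p (fun _ => x) Hp (subdivision_diag x) 1%nat Hn)
      as Hle.
    rewrite (dist_refl _ _ Hm), (dist_sym _ _ Hm y x) in Hle. rewrite Hp0, (dist_sym _ _ Hm).
    simpl in Hle. lra. }
  assert (Hlow : d x y <= INR n * d (p O) (p 1%nat)).
  { rewrite <- Hp0, <- Hpn at 1.
    apply (dist_chain_le _ _ Hm n p _ (fun i Hi => Req_le _ _ (Hconst i Hi)) O n).
    lia. }
  intros i Hi. rewrite Hconst by exact Hi.
  apply Rle_antisym; [exact Hup|].
  apply (Rmult_le_reg_l (INR n)); [lra|]. field_simplify; lra.
Qed.

(** * Existence of subdivision points *)

Definition averaging_step (x y : X) (p : nat -> X) : nat -> X :=
  fun i => if Nat.eqb i 0 then x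
           else if Nat.ltb i n then sigma (p (i - 1)%nat) (p (i + 1)%nat) (1 / 2) else y.

Definition averaging_iterate (x y : X) (k : nat) : nat -> X :=
  Nat.iter k (averaging_step x y) (fun i => if Nat.ltb i n then x else y).

Variables x y : X.

Let it := averaging_iterate x y.

Lemma averaging_iterate_0 k : it k O = x.
Proof.
  destruct k; simpl; unfold averaging_step; [|reflexivity].
  destruct (Nat.ltb_spec 0 n); [reflexivity | lia].
Qed.

Lemma averaging_iterate_n k : it k n = y.
Proof.
  destruct k; simpl; unfold averaging_step.
  - destruct (Nat.ltb_spec n n); [lia | reflexivity].
  - destruct (Nat.eqb_spec n 0); [lia|]. destruct (Nat.ltb_spec n n); [lia | reflexivity].
Qed.

Lemma averaging_iterate_S k i : (1 <= i)%nat -> (i <= n - 1)%nat ->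
  it (S k) i = sigma (it k (i - 1)%nat) (it k (i + 1)%nat) (1 / 2).
Proof.
  intros H1 H2. simpl. unfold averaging_step at 1.
  destruct (Nat.eqb_spec i 0); [lia|]. destruct (Nat.ltb_spec i n); [reflexivity | lia].
Qed.

Lemma averaging_iterate_first_step i : (1 <= i)%nat -> (i <= n - 1)%nat ->
  d (it O i) (it 1%nat i) <= d x y.
Proof.
  intros H1 H2. rewrite averaging_iterate_S by assumption. simpl.
  destruct (Nat.ltb_spec i n), (Nat.ltb_spec (i - 1) n); try lia.
  rewrite bicombing_dist_l by lra. pose proof (dist_nonneg _ _ Hm x y).
  destruct (Nat.ltb_spec (i + 1) n); [rewrite (dist_refl _ _ Hm)|]; lra.
Qed.

Lemma averaging_iterate_increment k i : (i <= n)%nat ->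
  d (it k i) (it (S k) i) <= d x y * rate n ^ k * weight n i.
Proof.
  apply (averaging_decay n Hn (fun k i => d (it k i) (it (S k) i))).
  - apply (dist_nonneg _ _ Hm).
  - intros k'. rewrite !averaging_iterate_0, (dist_refl _ _ Hm). lra.
  - intros k'. rewrite !averaging_iterate_n, (dist_refl _ _ Hm). lra.
  - intros k' j H1 H2.
    rewrite (averaging_iterate_S (S k')), (averaging_iterate_S k') by assumption.
    pose proof (bicombing_conical (it k' (j - 1)%nat) (it k' (j + 1)%nat)
                  (it (S k') (j - 1)%nat) (it (S k') (j + 1)%nat) (1 / 2) ltac:(lra)).
    lra.
  - intros j H1 H2. pose proof (weight_ge_1 n Hn j H1 H2).
    pose proof (averaging_iterate_first_step j H1 H2). pose proof (dist_nonneg _ _ Hm x y).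
    nra.
Qed.

Hypothesis Hprop : proper_space d.

Lemma averaging_iterate_converges i : (i <= n)%nat ->
  exists z, converges d (fun k => it k i) z.
Proof.
  intros Hi. apply (proper_complete _ _ Hm Hprop).
  apply (geometric_cauchy _ _ Hm _ (d x y * (INR n * INR n)) (rate n)).
  - pose proof (dist_nonneg _ _ Hm x y). pose proof (INR_ge_1 n Hn). nra.
  - exact (rate_range n Hn).
  - intros k. eapply Rle_trans; [apply averaging_iterate_increment; exact Hi|].
    pose proof (weight_le_sqr n i Hi). pose proof (rate_range n Hn).
    assert (0 <= d x y * rate n ^ k)
      by (apply Rmult_le_pos; [apply (dist_nonneg _ _ Hm) | apply pow_le; lra]).
    replace (d x y * (INR n * INR n) * rate n ^ k)
      with (d x y * rate n ^ k * (INR n * INR n)) by ring.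
    apply Rmult_le_compat_l; assumption.
Qed.

Lemma subdivision_exists : exists p, subdivision_points sigma n x y p.
Proof.
  destruct (functional_choice
              (fun i z => (i <= n)%nat -> converges d (fun k => it k i) z)) as [p Hp].
  { intros i. destruct (Nat.le_gt_cases i n) as [Hi|Hi].
    - destruct (averaging_iterate_converges i Hi) as [z Hz]. exists z. intros _. exact Hz.
    - exists x. intros Hi'. lia. }
  exists p. split; [|split].
  - apply (converges_const_eq _ _ Hm _ _ _ (Hp O ltac:(lia)) averaging_iterate_0).
  - apply (converges_const_eq _ _ Hm _ _ _ (Hp n ltac:(lia)) averaging_iterate_n).
  - intros i H1 H2. apply (converges_unique _ _ Hm (fun k => it (S k) i)).
    + apply (converges_shift _ _ _ _ (Hp i ltac:(lia))).
    + assert (Hlim := bicombing_converges _ _ _ _ (1 / 2) ltac:(lra)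
                        (Hp (i - 1)%nat ltac:(lia)) (Hp (i + 1)%nat ltac:(lia))).
      intros e He. destruct (Hlim e He) as [N HN]. exists N. intros k Hk.
      rewrite averaging_iterate_S by assumption. apply HN. exact Hk.
Qed.

End Bicombing.

(** * The piecewise bicombing sigma^(n) *)

Lemma decompose_nat_plus_unit (m : nat) (s : R) : (1 <= m)%nat -> 0 <= s <= INR m ->
  exists i lam, (i < m)%nat /\ 0 <= lam <= 1 /\ s = INR i + lam.
Proof.
  induction m as [|m IH]; intros Hm Hs; [lia|].
  destruct (Nat.eq_dec m 0) as [->|Hm0].
  - exists O, s. simpl in *. split; [lia | split; lra].
  - destruct (Rle_dec s (INR m)) as [Hle|Hgt].
    + destruct (IH ltac:(lia) ltac:(lra)) as [i [lam [Hi Hlam]]].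
      exists i, lam. split; [lia | exact Hlam].
    + rewrite S_INR in Hs. exists m, (s - INR m). split; [lia | split; lra].
Qed.

Section Interpolation.

Variables (X : Type) (d : X -> X -> R) (sigma : X -> X -> R -> X).
Hypothesis Hm : is_metric d.
Hypothesis Hs : conical_bicombing d sigma.

Lemma bicombing_position_eq_le (p : nat -> X) i j lam mu : (i <= j)%nat ->
  0 <= lam <= 1 -> 0 <= mu <= 1 -> INR i + lam = INR j + mu ->
  sigma (p i) (p (i + 1)%nat) lam = sigma (p j) (p (j + 1)%nat) mu.
Proof.
  intros Hij Hlam Hmu E.
  assert (Hj : (j <= i + 1)%nat) by (apply INR_le; rewrite plus_INR; simpl; lra).
  destruct (Nat.eq_dec i j) as [<-|Hne].
  - replace mu with lam by lra. reflexivity.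
  - replace j with (i + 1)%nat in * by lia. rewrite plus_INR in E. simpl in E.
    replace lam with 1 by lra. replace mu with 0 by lra.
    rewrite (bicombing_1 _ _ _ Hs), (bicombing_0 _ _ _ Hs). reflexivity.
Qed.

Lemma bicombing_position_eq (p : nat -> X) i j lam mu :
  0 <= lam <= 1 -> 0 <= mu <= 1 -> INR i + lam = INR j + mu ->
  sigma (p i) (p (i + 1)%nat) lam = sigma (p j) (p (j + 1)%nat) mu.
Proof.
  intros Hlam Hmu E. destruct (Nat.le_ge_cases i j).
  - apply bicombing_position_eq_le; assumption.
  - symmetry. apply bicombing_position_eq_le; auto.
Qed.

Variable n : nat.
Hypothesis Hn : (1 <= n)%nat.

Lemma grid_param i lam :
  (1 - lam) * (INR i / INR n) + lam * (INR (i + 1) / INR n) = (INR i + lam) / INR n.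
Proof. pose proof (INR_ge_1 n Hn). rewrite plus_INR. simpl. field. lra. Qed.

Lemma grid_decompose t : 0 <= t <= 1 ->
  exists i lam, (i < n)%nat /\ 0 <= lam <= 1 /\ t = (INR i + lam) / INR n.
Proof.
  intros Ht. pose proof (INR_ge_1 n Hn).
  destruct (decompose_nat_plus_unit n (t * INR n) Hn ltac:(split; nra))
    as [i [lam [Hi [Hlam E]]]].
  exists i, lam. split; [exact Hi | split; [exact Hlam|]]. rewrite <- E. field. lra.
Qed.

Lemma grid_range i lam : (i < n)%nat -> 0 <= lam <= 1 -> 0 <= (INR i + lam) / INR n <= 1.
Proof.
  intros Hi Hlam. pose proof (INR_ge_1 n Hn). pose proof (pos_INR i).
  assert (INR i + 1 <= INR n) by (rewrite <- S_INR; apply le_INR; lia).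
  split.
  - apply Rmult_le_pos; [lra | left; apply Rinv_0_lt_compat; lra].
  - apply (Rmult_le_reg_r (INR n)); [lra|].
    unfold Rdiv. rewrite Rmult_assoc, Rinv_l by lra. lra.
Qed.

Lemma grid_dist a b c : Rabs (a / INR n - b / INR n) * c = Rabs (a - b) * (c / INR n).
Proof.
  pose proof (INR_ge_1 n Hn). unfold Rdiv.
  rewrite <- Rmult_minus_distr_r, Rabs_mult, (Rabs_pos_eq (/ INR n))
    by (left; apply Rinv_0_lt_compat; lra).
  ring.
Qed.

Variables (x y : X) (p : nat -> X).
Hypothesis Hp : subdivision_points sigma n x y p.

Lemma subdivision_chain_le i k :
  (i + k <= n)%nat -> d (p i) (p (i + k)%nat) <= INR k * (d x y / INR n).
Proof.
  apply (dist_chain_le _ _ Hm n p).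
  intros j Hj. rewrite (subdivision_step _ _ _ Hm Hs n Hn x y p Hp j Hj). apply Rle_refl.
Qed.

(* Lower bound: otherwise going from [x] through the point and along the
   remaining chain would reach [y] in less than [d x y]. *)
Lemma subdivision_dist_start i lam : (i < n)%nat -> 0 <= lam <= 1 ->
  d x (sigma (p i) (p (i + 1)%nat) lam) = (INR i + lam) * (d x y / INR n).
Proof.
  intros Hi Hlam. pose proof (INR_ge_1 n Hn). pose proof Hp as [Hp0 [Hpn _]].
  pose proof (subdivision_step _ _ _ Hm Hs n Hn x y p Hp i Hi) as Hstep.
  set (u := sigma (p i) (p (i + 1)%nat) lam).
  assert (Hl : d (p i) u = lam * (d x y / INR n))
    by (unfold u; rewrite (bicombing_dist_l _ _ _ Hs), Hstep; auto).
  assert (Hr : d u (p (i + 1)%nat) = (1 - lam) * (d x y / INR n))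
    by (unfold u; rewrite (bicombing_dist_r _ _ _ Hs), Hstep; auto).
  apply Rle_antisym.
  - pose proof (subdivision_chain_le O i ltac:(lia)) as Hc. simpl in Hc. rewrite Hp0 in Hc.
    pose proof (dist_triangle _ _ Hm x (p i) u). lra.
  - pose proof (subdivision_chain_le (i + 1) (n - (i + 1)) ltac:(lia)) as Hc.
    replace (i + 1 + (n - (i + 1)))%nat with n in Hc by lia.
    rewrite Hpn, minus_INR, plus_INR in Hc by lia. simpl in Hc.
    pose proof (dist_triangle _ _ Hm x u y).
    pose proof (dist_triangle _ _ Hm u (p (i + 1)%nat) y).
    assert (d x y = INR n * (d x y / INR n)) by (field; lra).
    lra.
Qed.

Lemma subdivision_dist_between i lam j mu : (i < n)%nat -> 0 <= lam <= 1 ->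
  (j < n)%nat -> 0 <= mu <= 1 -> INR i + lam <= INR j + mu ->
  d (sigma (p i) (p (i + 1)%nat) lam) (sigma (p j) (p (j + 1)%nat) mu)
    = (INR j + mu - (INR i + lam)) * (d x y / INR n).
Proof.
  intros Hi Hlam Hj Hmu Hle.
  pose proof (subdivision_step _ _ _ Hm Hs n Hn x y p Hp) as Hstep.
  set (u := sigma (p i) (p (i + 1)%nat) lam). set (v := sigma (p j) (p (j + 1)%nat) mu).
  apply Rle_antisym.
  - destruct (Nat.lt_total i j) as [Hij|[<-|Hij]].
    + pose proof (subdivision_chain_le (i + 1) (j - (i + 1)) ltac:(lia)) as Hc.
      replace (i + 1 + (j - (i + 1)))%nat with j in Hc by lia.
      rewrite minus_INR, plus_INR in Hc by lia. simpl in Hc.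
      assert (d u (p (i + 1)%nat) = (1 - lam) * (d x y / INR n))
        by (unfold u; rewrite (bicombing_dist_r _ _ _ Hs), (Hstep i Hi); auto).
      assert (d (p j) v = mu * (d x y / INR n))
        by (unfold v; rewrite (bicombing_dist_l _ _ _ Hs), (Hstep j Hj); auto).
      pose proof (dist_triangle _ _ Hm u (p (i + 1)%nat) v).
      pose proof (dist_triangle _ _ Hm (p (i + 1)%nat) (p j) v).
      lra.
    + unfold u, v. rewrite (bicombing_dist _ _ _ Hs), (Hstep i Hi), Rabs_left1 by lra. lra.
    + assert (INR j + 1 <= INR i) by (rewrite <- S_INR; apply le_INR; lia).
      unfold u, v. rewrite (bicombing_position_eq p i j lam mu) by lra.
      rewrite (dist_refl _ _ Hm). replace (INR j + mu - (INR i + lam)) with 0 by lra. lra.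
  - pose proof (dist_triangle _ _ Hm x u v). unfold u, v in *.
    rewrite !subdivision_dist_start in * by assumption. lra.
Qed.

End Interpolation.

Section SigmaN.

Variables (X : Type) (d : X -> X -> R) (sigma : X -> X -> R -> X).
Hypothesis Hm : is_metric d.
Hypothesis Hs : conical_bicombing d sigma.
Variable n : nat.
Hypothesis Hn : (1 <= n)%nat.
Variable P : X -> X -> nat -> X.

(* Well defined because the two pieces meeting at a grid point agree there. *)
Lemma sigma_n_exists : exists s, is_sigma_n sigma n P s.
Proof.
  pose proof (INR_ge_1 n Hn).
  destruct (functional_choice (fun t (il : nat * R) => 0 <= t <= 1 ->
      (fst il < n)%nat /\ 0 <= snd il <= 1 /\ t = (INR (fst il) + snd il) / INR n))
    as [c Hc].
  { intros t. destruct (classic (0 <= t <= 1)) as [Ht|Ht].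
    - destruct (grid_decompose n Hn t Ht) as [i [lam Hil]].
      exists (i, lam). intros _. exact Hil.
    - exists (O, 0). intros Ht'. contradiction. }
  exists (fun x y t => sigma (P x y (fst (c t))) (P x y (fst (c t) + 1)%nat) (snd (c t))).
  intros x y lam i Hlam Hi. rewrite (grid_param n Hn).
  destruct (Hc _ (grid_range n Hn i lam Hi Hlam)) as [_ [Hlam' Et]].
  apply (bicombing_position_eq _ _ _ Hs); [exact Hlam' | exact Hlam|].
  apply (Rmult_eq_reg_r (/ INR n)); [|apply Rinv_neq_0_compat; lra].
  symmetry. exact Et.
Qed.

Lemma sigma_n_at s : is_sigma_n sigma n P s -> forall t, 0 <= t <= 1 ->
  exists i lam, (i < n)%nat /\ 0 <= lam <= 1 /\ t = (INR i + lam) / INR n /\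
    forall x y, s x y t = sigma (P x y i) (P x y (i + 1)%nat) lam.
Proof.
  intros Hsn t Ht. destruct (grid_decompose n Hn t Ht) as [i [lam [Hi [Hlam Et]]]].
  exists i, lam. split; [exact Hi | split; [exact Hlam | split; [exact Et|]]].
  intros x y. rewrite Et, <- (grid_param n Hn). apply Hsn; assumption.
Qed.

Hypothesis HP : forall x y, subdivision_points sigma n x y (P x y).

Lemma sigma_n_bicombing s : is_sigma_n sigma n P s -> bicombing d s.
Proof.
  intros Hsn x y. pose proof (INR_ge_1 n Hn). destruct (HP x y) as [Hp0 [Hpn _]].
  split; [|split].
  - pose proof (Hsn x y 0 O ltac:(lra) ltac:(lia)) as H0.
    rewrite (grid_param n Hn) in H0.
    replace ((INR 0 + 0) / INR n) with 0 in H0 by (simpl; field; lra).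
    rewrite H0, (bicombing_0 _ _ _ Hs). exact Hp0.
  - pose proof (Hsn x y 1 (n - 1)%nat ltac:(lra) ltac:(lia)) as H1.
    rewrite (grid_param n Hn) in H1. replace (n - 1 + 1)%nat with n in H1 by lia.
    replace ((INR (n - 1) + 1) / INR n) with 1 in H1
      by (rewrite minus_INR by lia; simpl; field; lra).
    rewrite H1, (bicombing_1 _ _ _ Hs). exact Hpn.
  - intros a b Ha Hb.
    destruct (sigma_n_at s Hsn a Ha) as [i [lam [Hi [Hlam [Ea Sa]]]]].
    destruct (sigma_n_at s Hsn b Hb) as [j [mu [Hj [Hmu [Eb Sb]]]]].
    rewrite Sa, Sb, Ea, Eb, (grid_dist n Hn).
    destruct (Rle_dec (INR i + lam) (INR j + mu)) as [Hle|Hgt].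
    + rewrite (subdivision_dist_between _ _ _ Hm Hs n Hn x y (P x y) (HP x y)) by assumption.
      rewrite Rabs_left1 by lra. ring.
    + rewrite (dist_sym _ _ Hm).
      rewrite (subdivision_dist_between _ _ _ Hm Hs n Hn x y (P x y) (HP x y)) by (auto; lra).
      rewrite Rabs_pos_eq by lra. ring.
Qed.

Lemma sigma_n_conical s : is_sigma_n sigma n P s -> conical_bicombing d s.
Proof.
  intros Hsn. split; [exact (sigma_n_bicombing s Hsn)|].
  intros x y x' y' t Ht. pose proof (INR_ge_1 n Hn).
  destruct (sigma_n_at s Hsn t Ht) as [i [lam [Hi [Hlam [Et St]]]]].
  rewrite !St. eapply Rle_trans; [apply (bicombing_conical _ _ _ Hs); exact Hlam|].
  pose proof (subdivision_dist_le _ _ _ Hs n Hn x y x' y' (P x y) (P x' y') (HP x y) (HP x' y'))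
    as Hcmp.
  pose proof (Hcmp i ltac:(lia)) as C0. pose proof (Hcmp (i + 1)%nat ltac:(lia)) as C1.
  apply (Rmult_le_compat_l (1 - lam)) in C0; [|lra].
  apply (Rmult_le_compat_l lam) in C1; [|lra].
  replace ((1 - t) * d x x' + t * d y y')
    with ((1 - lam) * ((1 - INR i / INR n) * d x x' + INR i / INR n * d y y')
          + lam * ((1 - INR (i + 1) / INR n) * d x x' + INR (i + 1) / INR n * d y y'))
    by (rewrite Et, plus_INR; simpl; field; lra).
  lra.
Qed.

End SigmaN.

Theorem lemma5p2 (X : Type) (d : X -> X -> R) (sigma : X -> X -> R -> X)
  (Hmet : is_metric d) (Hprop : proper_space d)
  (Hsig : conical_bicombing d sigma) (n : nat) (Hn : (1 <= n)%nat) :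
  (forall x y : X,
     exists p : nat -> X, subdivision_points sigma n x y p /\
       forall q : nat -> X, subdivision_points sigma n x y q ->
         forall i, (i <= n)%nat -> q i = p i) /\
  (forall P : X -> X -> nat -> X,
     (forall x y, subdivision_points sigma n x y (P x y)) ->
     (exists s, is_sigma_n sigma n P s) /\
     (forall s, is_sigma_n sigma n P s -> conical_bicombing d s)).
Proof.
  split.
  - intros x y. destruct (subdivision_exists X d sigma Hmet Hsig n Hn x y Hprop) as [p Hp].
    exists p. split; [exact Hp|].
    intros q Hq. exact (subdivision_unique X d sigma Hmet Hsig n Hn x y p q Hp Hq).
  - intros P HP. split.
    + exact (sigma_n_exists X d sigma Hsig n Hn P).
    + intros s. exact (sigma_n_conical X d sigma Hmet Hsig n Hn P HP s).
Qed.
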